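(* Let $\lambda$ be an infinite cardinal and $\mathcal C$ a small category with ${<}\lambda$-sequential colimits. Suppose that for each object $a$ of $\mathcal C$ we are given a set $Q_a$ with $|Q_a|\le\lambda$, each element of which is a set of morphisms that is generic above $a$. Then for every object $c$ of $\mathcal C$ there is a sequential-colimit-preserving functor $F:\lambda\to\mathcal C$ with $F(0)=c$ such that for every $\alpha<\lambda$ and every $X\in Q_{F(\alpha)}$ there is $\beta$ with $\alpha<\beta<\lambda$ and $F(\alpha\to\beta)\in X$.
   Context: An ordinal $\lambda$ is viewed as a category (a poset) with a unique morphism $\alpha\to\beta$ whenever $\alpha\le\beta$. A category $\mathcal C$ has ${<}\lambda$-sequential colimits if for every ordinal $\alpha<\lambda$ every diagram $\alpha\to\mathcal C$ has a colimit. A functor $F:\lambda\to\mathcal C$ is sequential-colimit-preserving if for every limit ordinal $\alpha<\lambda$, $F(\alpha)$ (with the morphisms $F(\beta\to\alpha)$, $\beta<\alpha$) is a colimit of the restricted diagram $F|_\alpha$. For an object $a$ of a small category $\mathcal C$, a set $X$ of morphisms with domain $a$ is generic above $a$ if for every morphism $f:a\to b$ there are an object $c$ and a morphism $g:b\to c$ with $g\circ f\in X$. *)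

Set Implicit Arguments.

Record Category := {
  Obj :> Type;
  Hom : Obj -> Obj -> Type;
  idm : forall a, Hom a a;
  comp : forall a b c, Hom b c -> Hom a b -> Hom a c;
  comp_id_l : forall a b (f : Hom a b), comp (idm b) f = f;
  comp_id_r : forall a b (f : Hom a b), comp f (idm a) = f;
  comp_assoc : forall a b c d (h : Hom c d) (g : Hom b c) (f : Hom a b),
      comp h (comp g f) = comp (comp h g) f
}.
Arguments Hom {C} : rename.
Arguments idm {C} : rename.
Arguments comp {C a b c} : rename.

(** A functor from a preorder (P, le), viewed as a thin category, to C.
    Morphism components take the proof of [le x y]; functoriality is stated
    for all such proofs. *)
Record PFunctor (P : Type) (le : P -> P -> Prop) (C : Category) := {
  fobj :> P -> C;
  fmor : forall x y, le x y -> Hom (fobj x) (fobj y);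
  fmor_id : forall x (p : le x x), fmor p = idm (fobj x);
  fmor_comp : forall x y z (p : le x y) (q : le y z) (r : le x z),
      fmor r = comp (fmor q) (fmor p)
}.
Arguments fobj {P le C}.
Arguments fmor {P le C} _ {x y}.

Definition is_colimit (P : Type) (le : P -> P -> Prop) (C : Category)
  (D : PFunctor le C) (v : C) (iota : forall x, Hom (D x) v) : Prop :=
  (forall x y (p : le x y), comp (iota y) (fmor D p) = iota x) /\
  (forall (w : C) (kappa : forall x, Hom (D x) w),
     (forall x y (p : le x y), comp (kappa y) (fmor D p) = kappa x) ->
     exists u : Hom v w,
       (forall x, comp u (iota x) = kappa x) /\
       (forall u' : Hom v w, (forall x, comp u' (iota x) = kappa x) -> u' = u)).

(** An ordinal lambda is represented by a type T with a strict well-order lt;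
    an ordinal alpha < lambda is an element a : T, identified with the
    initial segment {x | lt x a}. *)
Definition is_well_order (T : Type) (lt : T -> T -> Prop) : Prop :=
  well_founded lt /\
  (forall x y z, lt x y -> lt y z -> lt x z) /\
  (forall x y, lt x y \/ x = y \/ lt y x) /\
  (forall x, ~ lt x x).

Definition ole (T : Type) (lt : T -> T -> Prop) (x y : T) : Prop :=
  lt x y \/ x = y.

Definition seg (T : Type) (lt : T -> T -> Prop) (a : T) : Type :=
  { x : T | lt x a }.
Definition seg_le (T : Type) (lt : T -> T -> Prop) (a : T)
  (x y : seg lt a) : Prop := ole lt (proj1_sig x) (proj1_sig y).

Definition is_infinite_cardinal (T : Type) (lt : T -> T -> Prop) : Prop :=
  is_well_order lt /\
  (exists f : nat -> T, forall m n, f m = f n -> m = n) /\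
  (forall a : T, ~ exists g : T -> seg lt a, forall x y, g x = g y -> x = y).

Definition has_seq_colimits_below (T : Type) (lt : T -> T -> Prop)
  (C : Category) : Prop :=
  forall (a : T) (D : PFunctor (@seg_le T lt a) C),
    exists (v : C) (iota : forall x, Hom (D x) v), is_colimit D v iota.

Definition is_limit_ordinal (T : Type) (lt : T -> T -> Prop) (a : T) : Prop :=
  (exists x, lt x a) /\ (forall x, lt x a -> exists y, lt x y /\ lt y a).

Definition restrict (T : Type) (lt : T -> T -> Prop) (C : Category)
  (F : PFunctor (ole lt) C) (a : T) : PFunctor (@seg_le T lt a) C.
Proof.
  refine {| fobj := fun x : seg lt a => F (proj1_sig x);
            fmor := fun x y (p : seg_le x y) => fmor F p |}.
  - intros x p. apply fmor_id.
  - intros x y z p q r. apply fmor_comp.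
Defined.

Definition seq_colimit_preserving (T : Type) (lt : T -> T -> Prop)
  (C : Category) (F : PFunctor (ole lt) C) : Prop :=
  forall a : T, is_limit_ordinal lt a ->
    is_colimit (restrict F a) (F a)
      (fun x : seg lt a => fmor F (or_introl (proj2_sig x) : ole lt (proj1_sig x) a)).

(** A set X of morphisms with domain a (a predicate on the morphisms out of a)
    is generic above a. *)
Definition generic_above (C : Category) (a : C)
  (X : forall b : C, Hom a b -> Prop) : Prop :=
  forall (b : C) (f : Hom a b), exists (c : C) (g : Hom b c), X c (comp g f).

(** Since lambda is an infinite cardinal, lambda x lambda injects into lambda (Hessenberg),
    so every request (alpha, t) -- "the t-th member of Q_{F alpha}" -- can be scheduled at
    some stage beta >= alpha.  F is built by transfinite recursion: F 0 = c, limit stages are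
    chosen colimits, and the step beta -> beta + 1 serves the request scheduled at beta:
    genericity of the requested set X yields g : F beta -> d with g o F(alpha -> beta) in X,
    and F(beta + 1) := d. *)

From Stdlib Require Import Classical ClassicalEpsilon FunctionalExtensionality
  ProofIrrelevance Eqdep Arith List Lia Relation_Operators Inverse_Image
  Lexicographic_Product FinFun.

Local Notation decide := excluded_middle_informative.
Local Notation choose := (@constructive_indefinite_description _ _).

Lemma nat_not_injects_into_list (A : Type) (l : list A) (f : nat -> A) :
  Injective f -> ~ (forall n, In (f n) l).
Proof.
  intros f_inj f_in.
  assert (nodup : NoDup (map f (seq 0 (S (length l))))).
  { apply Injective_map_NoDup; [exact f_inj | apply seq_NoDup]. }
  assert (sub : incl (map f (seq 0 (S (length l)))) l).
  { intros y Hy. apply in_map_iff in Hy. destruct Hy as [i [<- _]]. apply f_in. }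
  pose proof (NoDup_incl_length nodup sub) as Hlen.
  rewrite length_map, length_seq in Hlen. lia.
Qed.

(** Morphisms are packed with their endpoints, so that the transfinite construction below
    never has to transport a morphism along an equality of objects. *)

Section Arrows.
Context {C : Category}.

Definition Arr : Type := {a : C & {b : C & Hom a b}}.
Definition arr {a b : C} (f : Hom a b) : Arr := existT _ a (existT _ b f).
Definition src (w : Arr) : C := projT1 w.
Definition tgt (w : Arr) : C := projT1 (projT2 w).
Definition pay (w : Arr) : Hom (src w) (tgt w) := projT2 (projT2 w).

(** Junk value [f] when [f] and [g] are not composable. *)
Definition arr_comp (g f : Arr) : Arr :=
  match decide (tgt f = src g) with
  | left e => arr (comp (pay g) (eq_rect _ (fun b => Hom (src f) b) (pay f) _ e))
  | right _ => f
  end.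

Lemma arr_ind (P : Arr -> Prop) : (forall a b (f : Hom a b), P (arr f)) -> forall w, P w.
Proof. intros H [a [b f]]. exact (H a b f). Qed.

Lemma arr_inj a b (f g : Hom a b) : arr f = arr g -> f = g.
Proof. intro E. do 2 apply inj_pairT2 in E. exact E. Qed.

Lemma arr_comp_arr a b c (f : Hom a b) (g : Hom b c) : arr_comp (arr g) (arr f) = arr (comp g f).
Proof.
  unfold arr_comp. destruct (decide _) as [e|n]; [|exfalso; apply n; reflexivity].
  change (b = b) in e. rewrite (UIP_refl _ _ e). reflexivity.
Qed.

Lemma arr_comp_src_tgt f g :
  tgt f = src g -> src (arr_comp g f) = src f /\ tgt (arr_comp g f) = tgt g.
Proof.
  revert f. refine (arr_ind _ _). intros a b f. revert g. refine (arr_ind _ _). intros b' c g e.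
  cbn in e. subst b'. rewrite arr_comp_arr. split; reflexivity.
Qed.

Lemma arr_comp_assoc f g h : tgt f = src g -> tgt g = src h ->
  arr_comp h (arr_comp g f) = arr_comp (arr_comp h g) f.
Proof.
  revert f. refine (arr_ind _ _). intros a b f. revert g. refine (arr_ind _ _). intros b' c g.
  revert h. refine (arr_ind _ _). intros c' d h e1 e2. cbn in e1, e2. subst b' c'.
  rewrite !arr_comp_arr, comp_assoc. reflexivity.
Qed.

Lemma arr_comp_id_l f b : tgt f = b -> arr_comp (arr (idm b)) f = f.
Proof.
  revert f. refine (arr_ind _ _). intros a b' f e. cbn in e. subst b'.
  rewrite arr_comp_arr, comp_id_l. reflexivity.
Qed.

Definition extract (w : Arr) {a b : C} (e1 : src w = a) (e2 : tgt w = b) : Hom a b :=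
  eq_rect _ (fun b => Hom a b) (eq_rect _ (fun a => Hom a (tgt w)) (pay w) _ e1) _ e2.

Lemma arr_extract w a b (e1 : src w = a) (e2 : tgt w = b) : arr (extract w e1 e2) = w.
Proof. destruct w as [a0 [b0 f]]. cbn in e1, e2. subst. reflexivity. Qed.

Lemma arr_pred_transport a (X : forall d : C, Hom a d -> Prop) d d' (h : Hom a d) (h' : Hom a d') :
  arr h = arr h' -> X d' h' -> X d h.
Proof.
  intro E. apply inj_pairT2 in E.
  assert (G : forall s s' : {d : C & Hom a d}, s = s' ->
                X (projT1 s') (projT2 s') -> X (projT1 s) (projT2 s)) by (intros s s' ->; auto).
  exact (G _ _ E).
Qed.

Definition functorial {P : Type} (le : P -> P -> Prop) (ob : P -> C) (ar : P -> P -> Arr) : Prop :=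
  (forall x y, le x y -> src (ar x y) = ob x /\ tgt (ar x y) = ob y) /\
  (forall x, le x x -> ar x x = arr (idm (ob x))) /\
  (forall x y z, le x y -> le y z -> ar x z = arr_comp (ar y z) (ar x y)).

Definition build_functor {P : Type} {le : P -> P -> Prop} {ob : P -> C} {ar : P -> P -> Arr}
  (H : functorial le ob ar) : PFunctor le C.
Proof.
  refine {| fobj := ob;
            fmor := fun x y p =>
              extract (ar x y) (proj1 (proj1 H x y p)) (proj2 (proj1 H x y p)) |}.
  - intros x p. apply arr_inj. rewrite arr_extract. exact (proj1 (proj2 H) x p).
  - intros x y z p q r. apply arr_inj. rewrite <- arr_comp_arr, !arr_extract.
    exact (proj2 (proj2 H) x y z p q).
Defined.

Lemma build_functor_fmor {P : Type} {le : P -> P -> Prop} {ob : P -> C} {ar : P -> P -> Arr}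
  (H : functorial le ob ar) {x y : P} (p : le x y) :
  arr (fmor (build_functor H) p) = ar x y.
Proof. apply arr_extract. Qed.

Lemma is_colimit_transfer (P : Type) (le : P -> P -> Prop) (o : P -> C)
  (m1 m2 : forall x y, le x y -> Hom (o x) (o y)) i1 c1 i2 c2 v v'
  (iota : forall x, Hom (o x) v) (iota' : forall x, Hom (o x) v') :
  (forall x y p, arr (m1 x y p) = arr (m2 x y p)) -> v = v' ->
  (forall x, arr (iota x) = arr (iota' x)) ->
  is_colimit (Build_PFunctor le C o m1 i1 c1) v iota ->
  is_colimit (Build_PFunctor le C o m2 i2 c2) v' iota'.
Proof.
  intros Em Ev Ei H. subst v'.
  assert (m1 = m2) by (extensionality x; extensionality y; extensionality p; apply arr_inj, Em).
  subst m2. rewrite (proof_irrelevance _ i2 i1), (proof_irrelevance _ c2 c1).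
  replace iota' with iota; [exact H|]. extensionality x. apply arr_inj, Ei.
Qed.
End Arrows.

Arguments Arr : clear implicits.

Section WellOrder.
Variables (T : Type) (lt : T -> T -> Prop).
Hypothesis lt_wf : well_founded lt.
Hypothesis lt_trans : forall x y z, lt x y -> lt y z -> lt x z.
Hypothesis lt_total : forall x y, lt x y \/ x = y \/ lt y x.
Hypothesis lt_irrefl : forall x, ~ lt x x.

Local Notation le := (ole lt).

Lemma le_trans x y z : le x y -> le y z -> le x z.
Proof. unfold ole. intros [Hxy|<-] [Hyz|<-]; eauto. Qed.

Lemma le_of_not_lt x y : ~ lt x y -> le y x.
Proof. intro H. destruct (lt_total x y) as [A|[A|A]]; [contradiction|right|left]; auto. Qed.

Lemma lt_of_le_neq x y : le x y -> x <> y -> lt x y.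
Proof. intros [H|H] N; [exact H|contradiction]. Qed.

Lemma lt_of_le_lt x y z : le x y -> lt y z -> lt x z.
Proof. intros [Hxy|<-] Hyz; eauto. Qed.

Lemma lt_of_lt_le x y z : lt x y -> le y z -> lt x z.
Proof. intros Hxy [Hyz|<-]; eauto. Qed.

Lemma exists_least (P : T -> Prop) :
  (exists x, P x) -> exists x, P x /\ forall y, P y -> ~ lt y x.
Proof.
  intros [x Px]. induction x as [x IH] using (well_founded_ind lt_wf).
  destruct (classic (exists y, P y /\ lt y x)) as [[y [Py Hyx]]|none].
  - exact (IH y Hyx Py).
  - exists x. split; [exact Px|]. intros y Py Hyx. apply none. eauto.
Qed.

Definition least (P : T -> Prop) (H : exists x, P x) : T :=
  proj1_sig (choose (exists_least P H)).

Lemma least_spec P H : P (least P H) /\ forall y, P y -> ~ lt y (least P H).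
Proof. exact (proj2_sig (choose (exists_least P H))). Qed.

Definition immediate_pred (be al : T) : Prop :=
  lt be al /\ forall z, lt z al -> le z be.

Lemma ordinal_cases al :
  (exists be, immediate_pred be al) \/ is_limit_ordinal lt al \/ (forall z, ~ lt z al).
Proof.
  destruct (classic (exists be, immediate_pred be al)) as [pred|no_pred]; [left; exact pred|right].
  destruct (classic (exists z, lt z al)) as [nonzero|zero]; [left|right; eauto].
  split; [exact nonzero|]. intros x Hx. apply NNPP. intro N. apply no_pred.
  exists x. split; [exact Hx|]. intros z Hz. apply le_of_not_lt. intro Hxz. apply N. eauto.
Qed.

Lemma immediate_pred_unique be be' al :
  immediate_pred be al -> immediate_pred be' al -> be = be'.
Proof.
  intros [H1 H2] [H1' H2']. destruct (H2 be' H1') as [A|A]; [|exact (eq_sym A)].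
  destruct (H2' be H1) as [A'|A']; [|exact A'].
  exfalso. exact (lt_irrefl be (lt_trans _ _ _ A' A)).
Qed.

Definition below (a : T) : T -> Prop := fun x => lt x a.
Definition infinite (A : T -> Prop) : Prop :=
  exists c : nat -> T, (forall n, A (c n)) /\ Injective c.
Definition injects_into (A B : T -> Prop) : Prop :=
  exists f : T -> T, (forall x, A x -> B (f x)) /\
                     (forall x y, A x -> A y -> f x = f y -> x = y).
Definition pairing_on (A : T -> Prop) (p : T -> T -> T) : Prop :=
  (forall x y, A x -> A y -> A (p x y)) /\
  (forall x y x' y', A x -> A y -> A x' -> A y' -> p x y = p x' y' -> x = x' /\ y = y').

Lemma increasing_injective (e : nat -> T) : (forall n, lt (e n) (e (S n))) -> Injective e.
Proof.
  intros inc.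
  assert (mono : forall m k, lt (e m) (e (S (k + m)))).
  { intros m k. induction k as [|k IH]; [apply inc|]. eapply lt_trans; [exact IH|apply inc]. }
  assert (neq : forall m n, m < n -> e m <> e n).
  { intros m n Hmn E. specialize (mono m (n - S m)).
    replace (S (n - S m + m)) with n in mono by lia. rewrite E in mono. exact (lt_irrefl _ mono). }
  intros m n E. destruct (Nat.lt_trichotomy m n) as [A|[A|A]]; [|exact A|];
    exfalso; [exact (neq m n A E)|exact (neq n m A (eq_sym E))].
Qed.

Definition next (x : T) : T :=
  match decide (exists y, lt x y) with
  | left H => least (lt x) H
  | right _ => x
  end.

Lemma lt_next x : (exists y, lt x y) -> lt x (next x).
Proof.
  intro H. unfold next. destruct (decide _) as [H'|H']; [apply (least_spec _ H')|contradiction].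
Qed.

Lemma next_le x y : lt x y -> le (next x) y.
Proof.
  intro Hxy. unfold next. destruct (decide _) as [H|H]; [|exfalso; eauto].
  apply le_of_not_lt. exact (proj2 (least_spec _ H) y Hxy).
Qed.

Lemma le_next_inv x y : le y (next x) -> le y x \/ y = next x.
Proof.
  intro Hy. destruct (lt_total x y) as [Hxy|[<-|Hyx]];
    [|left; right; reflexivity|left; left; exact Hyx].
  right. destruct Hy as [Hy|Hy]; [|exact Hy].
  exfalso. apply (lt_irrefl y). eapply lt_of_lt_le; [exact Hy|]. exact (next_le x y Hxy).
Qed.

Definition enum_from (z : T) (n : nat) : T :=
  Nat.iter n next (least (fun _ => True) (ex_intro (fun _ => True) z I)).

Lemma enum_from_cover z n x : le x (enum_from z n) -> In x (map (enum_from z) (seq 0 (S n))).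
Proof.
  revert x. induction n as [|n IH]; intros x Hx.
  - left. destruct Hx as [Hx|Hx]; [exfalso|exact (eq_sym Hx)].
    exact (proj2 (least_spec _ _) x I Hx).
  - rewrite seq_S, map_app, in_app_iff.
    destruct (le_next_inv _ _ Hx) as [Hle| ->]; [left; exact (IH x Hle)|right; left; reflexivity].
Qed.

Lemma enum_from_below g : (forall n, enum_from g n <> g) ->
  forall n, lt (enum_from g n) g /\ lt (enum_from g n) (enum_from g (S n)).
Proof.
  intros avoid.
  assert (below_g : forall n, lt (enum_from g n) g).
  { induction n as [|n IH]; apply lt_of_le_neq; try apply avoid.
    - apply le_of_not_lt. exact (proj2 (least_spec _ _) g I).
    - exact (next_le _ _ IH). }
  intro n. split; [apply below_g|]. apply lt_next. exists g. apply below_g.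
Qed.

Lemma finite_below_list g : ~ infinite (below g) -> exists l, forall x, le x g -> In x l.
Proof.
  intros fin. destruct (classic (exists n, enum_from g n = g)) as [[n Hn]|avoid].
  - exists (map (enum_from g) (seq 0 (S n))).
    intros x Hx. apply enum_from_cover. rewrite Hn. exact Hx.
  - exfalso. apply fin.
    assert (Hb : forall n, lt (enum_from g n) g /\ lt (enum_from g n) (enum_from g (S n)))
      by (apply enum_from_below; intros n E; apply avoid; eauto).
    exists (enum_from g). split; [intro n; apply Hb|]. apply increasing_injective. apply Hb.
Qed.

Definition tmax (x y : T) : T := if decide (lt x y) then y else x.

Lemma le_tmax_l x y : le x (tmax x y).
Proof. unfold tmax. destruct (decide _); [left|right]; auto. Qed.

Lemma le_tmax_r x y : le y (tmax x y).
Proof. unfold tmax. destruct (decide _); [right; reflexivity|]. now apply le_of_not_lt. Qed.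

Lemma tmax_cases x y : tmax x y = x \/ tmax x y = y.
Proof. unfold tmax. destruct (decide _); auto. Qed.

Definition godel_key (w : T * T) : T * (T * T) := (tmax (fst w) (snd w), w).
Definition godel (w' w : T * T) : Prop :=
  slexprod _ _ lt (slexprod _ _ lt lt) (godel_key w') (godel_key w).

Lemma godel_wf : well_founded godel.
Proof.
  apply (wf_inverse_image _ _ _ godel_key).
  apply wf_slexprod; [|apply wf_slexprod]; exact lt_wf.
Qed.

Lemma godel_total w w' : w = w' \/ godel w w' \/ godel w' w.
Proof.
  destruct w as [a b], w' as [a' b']. unfold godel, godel_key; simpl.
  destruct (lt_total (tmax a b) (tmax a' b')) as [H|[H|H]];
    [right; left; now constructor| |right; right; now constructor].
  rewrite H. destruct (lt_total a a') as [Ha|[<-|Ha]].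
  - right; left. now do 2 constructor.
  - destruct (lt_total b b') as [Hb|[<-|Hb]]; [right; left|left; reflexivity|right; right];
      now do 2 constructor.
  - right; right. now do 2 constructor.
Qed.

Lemma godel_le w' w : godel w' w -> le (tmax (fst w') (snd w')) (tmax (fst w) (snd w)).
Proof. unfold godel, godel_key. intro H. inversion H; [left; assumption|right; reflexivity]. Qed.

Lemma le_injects_into_below g p : pairing_on (below g) p -> infinite (below g) ->
  exists j, (forall x, le x g -> below g (j x)) /\
            (forall x y, le x g -> le y g -> j x = j y -> x = y).
Proof.
  intros [p_in p_inj] [c [c_in c_inj]].
  assert (c01 : c 0 <> c 1) by (intro E; apply c_inj in E; discriminate).
  assert (lt_g : forall x, le x g -> x <> g -> below g x) by (intros; now apply lt_of_le_neq).
  exists (fun x => if decide (x = g) then p (c 1) (c 0) else p (c 0) x). split.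
  - intros x Hx. destruct (decide (x = g)); apply p_in; auto.
  - intros x y Hx Hy. destruct (decide (x = g)) as [->|nx], (decide (y = g)) as [->|ny];
      intro E; [reflexivity| | |]; apply p_inj in E; auto;
      destruct E as [E1 E2]; try (exfalso; apply c01; congruence); exact E2.
Qed.

(** Hessenberg: number the pairs greedily along the Gödel order.  This never gets stuck,
    because the Gödel predecessors of a pair lie in the square of a smaller segment,
    which by induction (or finiteness) is smaller than the cardinal [S]. *)

Section Greedy.
Variable S : T -> Prop.
Hypothesis S_infinite : infinite S.
Hypothesis S_cardinal : forall g, S g -> ~ injects_into S (below g).
Hypothesis S_pairing_below :
  forall g, S g -> infinite (below g) -> exists p, pairing_on (below g) p.

Lemma square_small g : S g -> ~ exists H : T -> T * T,
    (forall s, S s -> le (fst (H s)) g /\ le (snd (H s)) g) /\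
    (forall s s', S s -> S s' -> H s = H s' -> s = s').
Proof.
  intros Sg [H [H_le H_inj]].
  destruct (classic (infinite (below g))) as [inf|fin].
  - destruct (S_pairing_below g Sg inf) as [p p_pair].
    destruct (le_injects_into_below g p p_pair inf) as [j [j_in j_inj]].
    destruct p_pair as [p_in p_inj].
    apply (S_cardinal g Sg). exists (fun s => p (j (fst (H s))) (j (snd (H s)))). split.
    + intros s Ss. destruct (H_le s Ss). apply p_in; apply j_in; assumption.
    + intros s s' Ss Ss' E. destruct (H_le s Ss), (H_le s' Ss').
      apply p_inj in E; try (apply j_in; assumption). destruct E as [E1 E2].
      apply H_inj; auto. apply injective_projections; apply j_inj; assumption.
  - destruct (finite_below_list g fin) as [l l_all].
    destruct S_infinite as [c [c_in c_inj]].
    apply (nat_not_injects_into_list _ (list_prod l l) (fun n => H (c n))).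
    + intros m n E. apply c_inj, H_inj; auto.
    + intro n. destruct (H_le (c n) (c_in n)).
      rewrite (surjective_pairing (H (c n))). apply in_prod; apply l_all; assumption.
Qed.

Definition greedy_step (w : T * T) (rec : forall w', godel w' w -> T) : T :=
  match decide (exists s, S s /\ forall w' (h : godel w' w),
                  S (fst w') -> S (snd w') -> rec w' h <> s) with
  | left H => proj1_sig (choose H)
  | right _ => fst w
  end.

Definition greedy : T * T -> T := Fix godel_wf (fun _ => T) greedy_step.

Lemma greedy_eq w : greedy w = greedy_step w (fun w' _ => greedy w').
Proof.
  apply (Fix_eq godel_wf (fun _ => T) greedy_step). intros x f1 f2 E.
  unfold greedy_step. replace f2 with f1; [reflexivity|].
  extensionality y. extensionality h. apply E.
Qed.

Lemma greedy_fresh w : S (fst w) -> S (snd w) ->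
  S (greedy w) /\ forall w', godel w' w -> S (fst w') -> S (snd w') -> greedy w' <> greedy w.
Proof.
  intros S1 S2. rewrite greedy_eq. unfold greedy_step. destruct (decide _) as [H|no_fresh].
  - exact (proj2_sig (choose H)).
  - exfalso. apply (square_small (tmax (fst w) (snd w))).
    { destruct (tmax_cases (fst w) (snd w)) as [E|E]; rewrite E; assumption. }
    set (pre := fun s => match decide (exists w', godel w' w /\ greedy w' = s) with
                         | left h => proj1_sig (choose h) | right _ => (s, s) end).
    assert (pre_spec : forall s, S s -> godel (pre s) w /\ greedy (pre s) = s).
    { intros s Ss. unfold pre. destruct (decide _) as [h|h]; [exact (proj2_sig (choose h))|].
      exfalso. apply no_fresh. exists s. split; [exact Ss|].
      intros w' hw _ _ E. apply h. eauto. }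
    exists pre. split.
    + intros s Ss. pose proof (godel_le _ _ (proj1 (pre_spec s Ss))) as hw.
      split; eapply le_trans; try exact hw; [apply le_tmax_l|apply le_tmax_r].
    + intros s s' Ss Ss' E.
      rewrite <- (proj2 (pre_spec s Ss)), <- (proj2 (pre_spec s' Ss')), E. reflexivity.
Qed.

Lemma greedy_pairing : pairing_on S (fun x y => greedy (x, y)).
Proof.
  split.
  - intros x y Sx Sy. exact (proj1 (greedy_fresh (x, y) Sx Sy)).
  - intros x y x' y' Sx Sy Sx' Sy' E.
    destruct (godel_total (x, y) (x', y')) as [A|[A|A]].
    + injection A; auto.
    + exfalso. exact (proj2 (greedy_fresh (x', y') Sx' Sy') (x, y) A Sx Sy E).
    + exfalso. exact (proj2 (greedy_fresh (x, y) Sx Sy) (x', y') A Sx' Sy' (eq_sym E)).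
Qed.
End Greedy.

Lemma pairing_below a : infinite (below a) -> exists p, pairing_on (below a) p.
Proof.
  induction a as [a IH] using (well_founded_ind lt_wf). intros inf.
  destruct (classic (exists b, lt b a /\ injects_into (below a) (below b)))
    as [[b [Hba [f [f_in f_inj]]]]|not_smaller].
  - destruct inf as [c [c_in c_inj]].
    assert (inf_b : infinite (below b)).
    { exists (fun n => f (c n)). split; [intro n; apply f_in, c_in|].
      intros m n E. apply c_inj, f_inj; auto. }
    destruct (IH b Hba inf_b) as [p [p_in p_inj]].
    exists (fun x y => p (f x) (f y)). split.
    + intros x y Hx Hy. eapply lt_trans; [apply p_in; apply f_in; assumption|exact Hba].
    + intros x y x' y' Hx Hy Hx' Hy' E. apply p_inj in E; try (apply f_in; assumption).
      destruct E; split; apply f_inj; assumption.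
  - eexists. apply (greedy_pairing (below a)).
    + exact inf.
    + intros b Hb Hf. apply not_smaller. eauto.
    + intros g Hg inf_g. exact (IH g Hg inf_g).
Qed.

Lemma exists_pairing : infinite (fun _ => True) ->
  (forall a, ~ injects_into (fun _ => True) (below a)) ->
  exists p : T -> T -> T, forall x y x' y', p x y = p x' y' -> x = x' /\ y = y'.
Proof.
  intros inf card. eexists. intros x y x' y'.
  apply (greedy_pairing (fun _ => True)); auto. intros g _ inf_g. now apply pairing_below.
Qed.

Section Schedule.
Variable pr : T -> T -> T.
Hypothesis pr_inj : forall x y x' y', pr x y = pr x' y' -> x = x' /\ y = y'.
Hypothesis segments_small : forall a, ~ injects_into (fun _ => True) (below a).

Lemma exists_gt : infinite (fun _ => True) -> forall b, exists b', lt b b'.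
Proof.
  intros [c [_ c_inj]] b. apply NNPP. intro maximal.
  assert (le_b : forall x, le x b) by (intro x; apply le_of_not_lt; intro H; apply maximal; eauto).
  assert (c01 : c 0 <> c 1) by (intro E; apply c_inj in E; discriminate).
  assert (miss : exists u, forall x, pr u x <> b).
  { destruct (classic (exists x, pr (c 0) x = b)) as [[x0 E0]|none]; [exists (c 1)|exists (c 0)].
    - intros x E. apply c01. apply (pr_inj (c 0) x0 (c 1) x). congruence.
    - intros x E. apply none. eauto. }
  destruct miss as [u miss]. apply (segments_small b). exists (pr u). split.
  - intros x _. apply lt_of_le_neq; [apply le_b|apply miss].
  - intros x y _ _ E. exact (proj2 (pr_inj _ _ _ _ E)).
Qed.

(** The request [(a, t)] is scheduled at every stage [pr (pr a t) k]; one of them lies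
    above [a]. *)
Lemma exists_schedule : exists schedule : T -> T * T,
  forall a t, exists b, le a b /\ schedule b = (a, t).
Proof.
  exists (fun b => match decide (exists a t k, pr (pr a t) k = b) with
           | left H => (proj1_sig (choose H), proj1_sig (choose (proj2_sig (choose H))))
           | right _ => (b, b) end).
  intros a t.
  assert (K : exists k, le a (pr (pr a t) k)).
  { apply NNPP. intro N. apply (segments_small a). exists (pr (pr a t)). split.
    - intros k _. apply NNPP. intro Nk. apply N. exists k. apply le_of_not_lt. exact Nk.
    - intros x y _ _ E. exact (proj2 (pr_inj _ _ _ _ E)). }
  destruct K as [k Hk]. exists (pr (pr a t) k). split; [exact Hk|].
  destruct (decide _) as [H|H]; [|exfalso; apply H; eauto].
  destruct (choose H) as [a' H1]; simpl. destruct (choose H1) as [t' [k' E]]; simpl.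
  apply pr_inj in E. destruct E as [E _]. apply pr_inj in E. destruct E; subst; reflexivity.
Qed.
End Schedule.

Section Construction.
Hypothesis lt_unbounded : forall b, exists b', lt b b'.
Variable schedule : T -> T * T.
Hypothesis schedule_complete : forall a t, exists b, le a b /\ schedule b = (a, t).
Variable C : Category.
Hypothesis C_colimits : has_seq_colimits_below lt C.
Variable Q : forall a : C, (forall b : C, Hom a b -> Prop) -> Prop.
Hypothesis Q_small : forall a : C, exists e : T -> (forall b : C, Hom a b -> Prop),
  forall X, Q a X -> exists t, e t = X.
Hypothesis Q_generic : forall (a : C) X, Q a X -> generic_above C a X.
Variable c0 : C.

Definition Q_enum (a : C) : T -> (forall b : C, Hom a b -> Prop) :=
  proj1_sig (choose (Q_small a)).

Lemma Q_enum_spec a X : Q a X -> exists t, Q_enum a t = X.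
Proof. exact (proj2_sig (choose (Q_small a)) X). Qed.

Definition extend (w : Arr C) (t : T) : {c : C & Hom (tgt w) c} :=
  match decide (Q (src w) (Q_enum (src w) t)) with
  | left H => let e := choose (Q_generic _ _ H (tgt w) (pay w)) in
              existT _ (proj1_sig e) (proj1_sig (choose (proj2_sig e)))
  | right _ => existT _ (tgt w) (idm (tgt w))
  end.

Lemma extend_spec a b (f : Hom a b) t : Q a (Q_enum a t) ->
  Q_enum a t (projT1 (extend (arr f) t)) (comp (projT2 (extend (arr f) t)) f).
Proof.
  intro HQ. unfold extend. destruct (decide _) as [H|H]; [|contradiction]. simpl.
  destruct (choose _) as [c1 H1]; simpl. exact (proj2_sig (choose H1)).
Qed.

Definition colim (a : T) (D : PFunctor (@seg_le T lt a) C) : {v : C & forall x, Hom (D x) v} :=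
  let e := choose (C_colimits a D) in existT _ (proj1_sig e) (proj1_sig (choose (proj2_sig e))).

Lemma colim_spec a D : is_colimit D (projT1 (colim a D)) (projT2 (colim a D)).
Proof. unfold colim. simpl. exact (proj2_sig (choose (proj2_sig (choose (C_colimits a D))))). Qed.

(** A stage [(F y, fun x => F (x -> y))]; the entries with [y < x] are junk. *)
Definition Stage : Type := (C * (T -> Arr C))%type.

(** Stage [be + 1] serves the request [(a, t) = schedule be] by extending [F (a -> be)]
    into the [t]-th generic set above [F a]. *)
Definition served_arr (be : T) (s : Stage) : Arr C :=
  let a := fst (schedule be) in if decide (le a be) then snd s a else snd s be.

Definition succ_stage (al be : T) (s : Stage) : Stage :=
  let e := extend (served_arr be s) (snd (schedule be)) in
  (projT1 e, fun x => if decide (x = al) then arr (idm (projT1 e))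
                      else arr_comp (arr (projT2 e)) (snd s x)).

Definition seg_ob (al : T) (rec : forall y, lt y al -> Stage) (s : seg lt al) : C :=
  fst (rec _ (proj2_sig s)).
Definition seg_ar (al : T) (rec : forall y, lt y al -> Stage) (s s' : seg lt al) : Arr C :=
  snd (rec _ (proj2_sig s')) (proj1_sig s).

Definition lim_stage (al : T) (rec : forall y, lt y al -> Stage) : Stage :=
  match decide (functorial (@seg_le T lt al) (seg_ob al rec) (seg_ar al rec)) with
  | left G => let v := colim al (build_functor G) in
      (projT1 v, fun x => match decide (lt x al) with
                          | left hx => arr (projT2 v (exist _ x hx))
                          | right _ => arr (idm (projT1 v))
                          end)
  | right _ => (c0, fun _ => arr (idm c0)) (* never taken, see [seg_functorial] *)
  end.

Definition stage_step (al : T) (rec : forall y, lt y al -> Stage) : Stage :=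
  match decide (exists be, immediate_pred be al) with
  | left H => let (be, Hbe) := choose H in succ_stage al be (rec be (proj1 Hbe))
  | right _ =>
      if decide (exists z, lt z al) then lim_stage al rec else (c0, fun _ => arr (idm c0))
  end.

Definition stage : T -> Stage := Fix lt_wf (fun _ => Stage) stage_step.

Lemma stage_eq al : stage al = stage_step al (fun y _ => stage y).
Proof.
  apply (Fix_eq lt_wf (fun _ => Stage) stage_step). intros x f1 f2 E.
  replace f2 with f1; [reflexivity|]. extensionality y. extensionality h. apply E.
Qed.

Lemma stage_succ al be : immediate_pred be al -> stage al = succ_stage al be (stage be).
Proof.
  intro Hbe. rewrite stage_eq. unfold stage_step. destruct (decide _) as [H|H]; [|exfalso; eauto].
  destruct (choose H) as [be' Hbe']. now rewrite (immediate_pred_unique be' be al Hbe' Hbe).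
Qed.

Lemma stage_zero al : (forall z, ~ lt z al) -> stage al = (c0, fun _ => arr (idm c0)).
Proof.
  intro zero. rewrite stage_eq. unfold stage_step.
  destruct (decide _) as [H|_]; [exfalso; destruct H as [be [Hbe _]]; exact (zero be Hbe)|].
  destruct (decide _) as [H|_]; [exfalso; destruct H as [z Hz]; exact (zero z Hz)|reflexivity].
Qed.

Lemma stage_limit al : is_limit_ordinal lt al -> stage al = lim_stage al (fun y _ => stage y).
Proof.
  intros [nonzero lim]. rewrite stage_eq. unfold stage_step. destruct (decide _) as [H|_].
  - exfalso. destruct H as [be [B1 B2]]. destruct (lim be B1) as [y [Y1 Y2]].
    exact (lt_irrefl be (lt_of_lt_le _ _ _ Y1 (B2 y Y2))).
  - destruct (decide _); [reflexivity|contradiction].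
Qed.

Definition ob (x : T) : C := fst (stage x).
Definition mor (x y : T) : Arr C := snd (stage y) x.

Definition coherent_at (al : T) : Prop :=
  (forall x, le x al -> src (mor x al) = ob x /\ tgt (mor x al) = ob al) /\
  mor al al = arr (idm (ob al)) /\
  (forall x y, le x y -> le y al -> mor x al = arr_comp (mor y al) (mor x y)).

Lemma succ_stage_shape al be : immediate_pred be al -> coherent_at be ->
  exists g : Arr C, src g = ob be /\ tgt g = ob al /\ mor al al = arr (idm (ob al)) /\
    forall x, x <> al -> mor x al = arr_comp g (mor x be).
Proof.
  intros Hbe [src_tgt [id _]]. unfold mor, ob in *. rewrite (stage_succ al be Hbe). simpl.
  exists (arr (projT2 (extend (served_arr be (stage be)) (snd (schedule be))))).
  split; [|split; [reflexivity|split]].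
  - simpl. unfold served_arr. destruct (decide _) as [h|h]; [exact (proj2 (src_tgt _ h))|].
    rewrite id. reflexivity.
  - destruct (decide (al = al)); [reflexivity|congruence].
  - intros x Hx. destruct (decide (x = al)); [congruence|reflexivity].
Qed.

Lemma coherent_succ al be : immediate_pred be al ->
  (forall y, lt y al -> coherent_at y) -> coherent_at al.
Proof.
  intros Hbe IH. pose proof (IH be (proj1 Hbe)) as coh_be.
  destruct (succ_stage_shape al be Hbe coh_be) as [g [g_src [g_tgt [id_al step]]]].
  destruct coh_be as [src_tgt_be [_ comp_be]].
  assert (le_be : forall x, le x al -> x <> al -> le x be)
    by (intros x Hx Hne; apply (proj2 Hbe), lt_of_le_neq; assumption).
  assert (src_tgt : forall x, le x al -> src (mor x al) = ob x /\ tgt (mor x al) = ob al).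
  { intros x Hx. destruct (classic (x = al)) as [->|Hne]; [rewrite id_al; split; reflexivity|].
    rewrite (step x Hne). destruct (src_tgt_be x (le_be x Hx Hne)) as [A B].
    assert (composable : tgt (mor x be) = src g) by congruence.
    destruct (arr_comp_src_tgt _ _ composable) as [C1 C2]. split; congruence. }
  split; [exact src_tgt|split; [exact id_al|]].
  intros x y Hxy Hy. destruct (classic (y = al)) as [->|Hne].
  - rewrite id_al. symmetry. apply arr_comp_id_l.
    exact (proj2 (src_tgt x (le_trans _ _ _ Hxy Hy))).
  - assert (Hy_be : le y be) by exact (le_be y Hy Hne).
    assert (Hx_ne : x <> al).
    { intros ->. exact (lt_irrefl al (lt_of_le_lt _ _ _ Hxy (lt_of_le_neq _ _ Hy Hne))). }
    rewrite (step x Hx_ne), (step y Hne), (comp_be x y Hxy Hy_be).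
    apply arr_comp_assoc.
    + exact (eq_trans (proj2 (proj1 (IH y (lt_of_le_neq _ _ Hy Hne)) x Hxy))
                      (eq_sym (proj1 (src_tgt_be y Hy_be)))).
    + rewrite g_src. exact (proj2 (src_tgt_be y Hy_be)).
Qed.

Lemma seg_functorial al : (forall y, lt y al -> coherent_at y) ->
  functorial (@seg_le T lt al) (seg_ob al (fun y _ => stage y)) (seg_ar al (fun y _ => stage y)).
Proof.
  intros IH. split; [|split].
  - intros [x hx] [y hy] p. exact (proj1 (IH y hy) x p).
  - intros [x hx] _. exact (proj1 (proj2 (IH x hx))).
  - intros [x hx] [y hy] [z hz] p q. exact (proj2 (proj2 (IH z hz)) x y p q).
Qed.

Lemma lim_stage_shape al : is_limit_ordinal lt al -> (forall y, lt y al -> coherent_at y) ->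
  exists G : functorial (@seg_le T lt al) (seg_ob al (fun y _ => stage y))
                        (seg_ar al (fun y _ => stage y)),
    ob al = projT1 (colim al (build_functor G)) /\
    (forall x (hx : lt x al),
       mor x al = arr (projT2 (colim al (build_functor G)) (exist _ x hx))) /\
    mor al al = arr (idm (ob al)).
Proof.
  intros lim IH. unfold mor, ob. rewrite (stage_limit al lim). unfold lim_stage.
  destruct (decide _) as [G|nG]; [|exfalso; exact (nG (seg_functorial al IH))].
  exists G. split; [reflexivity|split].
  - intros x hx. simpl. destruct (decide (lt x al)) as [h|h]; [|contradiction].
    rewrite (proof_irrelevance _ h hx). reflexivity.
  - simpl. destruct (decide (lt al al)) as [h|h]; [exfalso; exact (lt_irrefl al h)|reflexivity].
Qed.

Lemma coherent_limit al : is_limit_ordinal lt al ->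
  (forall y, lt y al -> coherent_at y) -> coherent_at al.
Proof.
  intros lim IH. destruct (lim_stage_shape al lim IH) as [G [E_ob [E_mor id_al]]].
  assert (src_tgt : forall x, le x al -> src (mor x al) = ob x /\ tgt (mor x al) = ob al).
  { intros x Hx. destruct (classic (x = al)) as [->|Hne]; [rewrite id_al; split; reflexivity|].
    rewrite (E_mor x (lt_of_le_neq _ _ Hx Hne)). split; [reflexivity|exact (eq_sym E_ob)]. }
  split; [exact src_tgt|split; [exact id_al|]].
  intros x y Hxy Hy. destruct (classic (y = al)) as [->|Hne].
  - rewrite id_al. symmetry. apply arr_comp_id_l.
    exact (proj2 (src_tgt x (le_trans _ _ _ Hxy Hy))).
  - assert (hy : lt y al) by exact (lt_of_le_neq _ _ Hy Hne).
    assert (hx : lt x al) by (destruct Hxy as [A| ->]; [exact (lt_trans _ _ _ A hy)|exact hy]).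
    rewrite (E_mor x hx), (E_mor y hy).
    assert (p : @seg_le T lt al (exist _ x hx) (exist _ y hy)) by exact Hxy.
    replace (mor x y) with (arr (fmor (build_functor G) p)) by exact (build_functor_fmor G p).
    rewrite arr_comp_arr. f_equal. symmetry.
    exact (proj1 (colim_spec al (build_functor G)) _ _ p).
Qed.

Lemma coherent_zero al : (forall z, ~ lt z al) -> coherent_at al.
Proof.
  intros zero.
  assert (only : forall x, le x al -> x = al)
    by (intros x [A|A]; [exfalso; exact (zero x A)|exact A]).
  unfold coherent_at, mor, ob. rewrite (stage_zero al zero). simpl. split; [|split; [reflexivity|]].
  - intros x Hx. rewrite (only x Hx), (stage_zero al zero). split; reflexivity.
  - intros x y Hxy Hy. rewrite (only y Hy) in Hxy.
    rewrite (only x Hxy), (only y Hy), (stage_zero al zero). simpl.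
    now rewrite arr_comp_id_l.
Qed.

Lemma coherent_all al : coherent_at al.
Proof.
  induction al as [al IH] using (well_founded_ind lt_wf).
  destruct (ordinal_cases al) as [[be Hbe]|[lim|zero]].
  - exact (coherent_succ al be Hbe IH).
  - exact (coherent_limit al lim IH).
  - exact (coherent_zero al zero).
Qed.

Lemma stages_functorial : functorial (ole lt) ob mor.
Proof.
  split; [|split].
  - intros x y p. exact (proj1 (coherent_all y) x p).
  - intros x _. exact (proj1 (proj2 (coherent_all x))).
  - intros x y z p q. exact (proj2 (proj2 (coherent_all z)) x y p q).
Qed.

Definition F : PFunctor (ole lt) C := build_functor stages_functorial.

Lemma F_seq_colimit_preserving : seq_colimit_preserving F.
Proof.
  intros al lim.
  destruct (lim_stage_shape al lim (fun y _ => coherent_all y)) as [G [E_ob [E_mor _]]].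
  eapply is_colimit_transfer; [| | |exact (colim_spec al (build_functor G))].
  - intros x y p. simpl. rewrite !arr_extract. reflexivity.
  - exact (eq_sym E_ob).
  - intros [x hx]. simpl. rewrite arr_extract. exact (eq_sym (E_mor x hx)).
Qed.

Lemma F_zero z : (forall x, le z x) -> F z = c0.
Proof.
  intro least_z. simpl. unfold ob. rewrite stage_zero; [reflexivity|].
  intros x Hx. destruct (least_z x) as [A| ->]; apply (lt_irrefl x);
    [exact (lt_trans _ _ _ Hx A)|exact Hx].
Qed.

Lemma F_serves a X : Q (F a) X ->
  exists b (H : lt a b), X (F b) (fmor F (or_introl H : le a b)).
Proof.
  intro HQ. destruct (Q_enum_spec _ _ HQ) as [t <-].
  destruct (schedule_complete a t) as [be [Hab Hsched]].
  destruct (exists_least (lt be) (lt_unbounded be)) as [b [Hb b_least]].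
  assert (Hbe : immediate_pred be b)
    by (split; [exact Hb|intros z Hz; apply le_of_not_lt; intro A; exact (b_least z A Hz)]).
  exists b, (lt_of_le_lt _ _ _ Hab Hb).
  set (phi := fmor F Hab).
  apply (arr_pred_transport _ (Q_enum (F a) t) _ _ _ (comp (projT2 (extend (arr phi) t)) phi)).
  - rewrite (build_functor_fmor stages_functorial). unfold mor. rewrite (stage_succ b be Hbe).
    unfold succ_stage, served_arr. rewrite Hsched. simpl.
    destruct (decide (le a be)) as [_|]; [|contradiction].
    destruct (decide (a = b)) as [->|_];
      [exfalso; exact (lt_irrefl b (lt_of_le_lt _ _ _ Hab Hb))|].
    replace (snd (stage be) a) with (arr phi) by exact (build_functor_fmor stages_functorial Hab).
    apply arr_comp_arr.
  - apply extend_spec. exact HQ.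
Qed.
End Construction.
End WellOrder.

Theorem proposition3p3
  (T : Type) (lt : T -> T -> Prop) (Hcard : is_infinite_cardinal lt)
  (C : Category) (Hcolim : has_seq_colimits_below lt C)
  (Q : forall a : C, (forall b : C, Hom a b -> Prop) -> Prop)
  (HQcard : forall a : C, exists e : T -> (forall b : C, Hom a b -> Prop),
                forall X, Q a X -> exists t, e t = X)
  (HQgen : forall (a : C) X, Q a X -> @generic_above C a X) :
  forall c : C, exists F : PFunctor (ole lt) C,
    seq_colimit_preserving F /\
    (forall z : T, (forall x, ole lt z x) -> F z = c) /\
    (forall (a : T) X, Q (F a) X ->
       exists b : T, exists H : lt a b, X (F b) (fmor F (or_introl H : ole lt a b))).
Proof.
  intro c. destruct Hcard as [[lt_wf [lt_trans [lt_total lt_irrefl]]] [[f f_inj] seg_small]].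
  assert (T_infinite : infinite T (fun _ => True)) by (exists f; split; auto).
  assert (segments_small : forall a, ~ injects_into T (fun _ => True) (below T lt a)).
  { intros a [g [g_in g_inj]]. apply (seg_small a). exists (fun x => exist _ (g x) (g_in x I)).
    intros x y E. exact (g_inj x y I I (f_equal (@proj1_sig _ _) E)). }
  destruct (exists_pairing T lt lt_wf lt_trans lt_total lt_irrefl T_infinite segments_small)
    as [pr pr_inj].
  pose proof (exists_gt T lt lt_total pr pr_inj segments_small T_infinite) as unbounded.
  destruct (exists_schedule T lt lt_total pr pr_inj segments_small) as [schedule complete].
  exists (F T lt lt_wf lt_trans lt_total lt_irrefl schedule C Hcolim Q HQcard HQgen c).
  split; [|split].
  - apply F_seq_colimit_preserving.
  - apply F_zero.
  - exact (F_serves T lt lt_wf lt_trans lt_total lt_irrefl unbounded schedule complete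
             C Hcolim Q HQcard HQgen c).
Qed.
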